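(* For all integers $0\le k\le n$, \[ B^{\mathrm{fmaj}}_{n,n-k}(q)=\sum_{\ell=0}^{k}q^{(n-k)(2\ell-n-k)}\,B_{n,n-\ell}(q)\,{n-\ell\brack k-\ell}_{q^2}. \]
   Context: $\mathcal{B}_n$ is the group of signed permutations of $[n]$ (bijections $\pi$ of $\{\pm1,\dots,\pm n\}$ with $\pi(-i)=-\pi(i)$, written $\pi=\pi_1\cdots\pi_n$), integers ordered naturally. Set $\pi_0=0$; $\mathrm{Des}_B(\pi)=\{i\in\{0,\dots,n-1\}:\pi_i>\pi_{i+1}\}$, $\mathrm{des}_B(\pi)=|\mathrm{Des}_B(\pi)|$, $\mathrm{neg}(\pi)=|\{i\in[n]:\pi_i<0\}|$, $\mathrm{fmaj}(\pi)=\sum_{i\in\mathrm{Des}_B(\pi)}2i+\mathrm{neg}(\pi)$; $B_{n,k}(q)$ is defined by $\sum_{\pi\in\mathcal{B}_n}t^{\mathrm{des}_B(\pi)}q^{\mathrm{fmaj}(\pi)}=\sum_kB_{n,k}(q)t^k$. For $0\le k\le n$ let $\mathcal{B}^{>}_{n,k}=\{(\pi,S):\pi\in\mathcal{B}_n,\ S\subseteq\mathrm{Des}_B(\pi),\ |S|=k\}$ (descent-starred signed permutations; elements of $S$ are the starred descents). For $(\pi,S)\in\mathcal{B}^{>}_{n,k}$ define $\mathrm{fmaj}((\pi,S))=\mathrm{fmaj}(\pi)-\sum_{j\in S}\bigl(2|\mathrm{Des}_B(\pi)\cap\{j,\dots,n-1\}|-1\bigr)$, and $B^{\mathrm{fmaj}}_{n,k}(q)=\sum_{(\pi,S)\in\mathcal{B}^{>}_{n,k}}q^{\mathrm{fmaj}((\pi,S))}$.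 $[k]_q=1+\dots+q^{k-1}$, $[n]_q!=\prod_{i=1}^n[i]_q$, ${n\brack k}_q=\frac{[n]_q!}{[k]_q![n-k]_q!}$, and the subscript $q^2$ means $q$ is replaced by $q^2$. *)

From HB Require Import structures.
From mathcomp Require Import all_boot all_order all_algebra.
From mathcomp Require Import fingroup perm.
Set Implicit Arguments. Unset Strict Implicit. Unset Printing Implicit Defensive.
Import Order.TTheory GRing.Theory Num.Theory.
Local Open Scope ring_scope.

(* A signed permutation of [n] is encoded by a permutation s of 'I_n and a
   sign vector e : pi_(i+1) = (-1)^(e i) * (s i + 1), for i : 'I_n. *)
Definition sperm (n : nat) : finType := ({perm 'I_n} * {ffun 'I_n -> bool})%type.

Definition pval n (p : sperm n) (i : nat) : int :=
  match i with
  | 0 => 0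
  | j.+1 => if (insub j : option 'I_n) is Some i then
              (if p.2 i then - ((p.1 i).+1)%:Z else ((p.1 i).+1)%:Z)
            else 0
  end.

Definition DesB n (p : sperm n) : {set 'I_n} :=
  [set i : 'I_n | pval p (val i).+1 < pval p (val i)].

Definition desB n (p : sperm n) : nat := #|DesB p|.

Definition negB n (p : sperm n) : nat := #|[set i : 'I_n | pval p (val i).+1 < 0]|.

Definition fmaj n (p : sperm n) : nat := (\sum_(i in DesB p) 2 * val i + negB p)%N.

Definition fmajS n (p : sperm n) (S : {set 'I_n}) : int :=
  (fmaj p)%:Z - \sum_(j in S)
     (2 * (#|[set i in DesB p | (val j <= val i)%N]|)%:Z - 1).

Section Polys.
Variable F : fieldType.
Variable q : F.

Definition Bnk (n k : nat) : F :=
  \sum_(p : sperm n | desB p == k) q ^+ fmaj p.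

Definition Bfmaj (n k : nat) : F :=
  \sum_(p : sperm n) \sum_(S : {set 'I_n} | (S \subset DesB p) && (#|S| == k))
      q ^ fmajS p S.

End Polys.

Definition qint (F : fieldType) (x : F) (k : nat) : F := \sum_(i < k) x ^+ i.
Definition qfact (F : fieldType) (x : F) (n : nat) : F := \prod_(i < n) qint x i.+1.
Definition qbinom (F : fieldType) (x : F) (n k : nat) : F :=
  qfact x n / (qfact x k * qfact x (n - k)).

Definition Fq : fieldType := {fraction {poly int}}.
Definition qX : Fq := tofrac ('X : {poly int}).

From HB Require Import structures.
From mathcomp Require Import all_boot all_order all_algebra.
From mathcomp Require Import zify ring.
Import GRing.Theory Num.Theory.
Local Open Scope ring_scope.

(* The star weights of a signed permutation with d descents only see the ranks
   of its descents counted from the right, and these ranks are exactly 1, ..., d.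
   Hence the starred descent sets of size m contribute q^fmaj times the elementary
   symmetric function e_m(q^-1, q^-3, ..., q^(1-2d)), which the q-Pascal recursion
   identifies with q^(-m(2d-m)) [d, m]_{q^2}.  Grouping signed permutations by their
   number of descents and putting m = n - k, d = n - l gives the formula. *)

Set Implicit Arguments.
Unset Strict Implicit.

Lemma subset_setD1 (T : finType) (D S : {set T}) a :
  (S \subset D :\ a) = (S \subset D) && (a \notin S).
Proof.
apply/idP/andP => [SDa|[SD aS]].
  split; first exact: subset_trans SDa (subsetDl _ _).
  by apply/negP => /(subsetP SDa); rewrite setD11.
apply/subsetP => x xS; rewrite in_setD1 (subsetP SD) // andbT.
by apply: contraNneq aS => <-.
Qed.

Lemma sum_subsets_cardS (R : nmodType) (T : finType) (D : {set T}) a (m : nat)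
    (F : {set T} -> R) : a \in D ->
  \sum_(S : {set T} | (S \subset D) && (#|S| == m.+1)) F S =
  \sum_(S : {set T} | (S \subset D :\ a) && (#|S| == m.+1)) F S
    + \sum_(S : {set T} | (S \subset D :\ a) && (#|S| == m)) F (a |: S).
Proof.
move=> aD; rewrite (bigID (fun S : {set T} => a \in S)) /= addrC; congr (_ + _).
  by apply: eq_bigl => S; rewrite subset_setD1 andbAC.
rewrite (reindex_onto (fun S : {set T} => a |: S) (fun S => S :\ a)) /=; last first.
  by move=> S /andP[_ aS]; rewrite setD1K.
apply: eq_bigl => S; rewrite setU11 andbT subUset sub1set aD /=.
case aS: (a \in S).
  have -> : ((a |: S) :\ a == S) = false.
    by apply/negbTE; apply: contraTneq aS => <-; rewrite setD11.
  by rewrite andbF subset_setD1 aS andbF.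
by rewrite setU1K ?aS // eqxx andbT cardsU1 aS eqSS subset_setD1 aS andbT.
Qed.

Section StarredSums.
Variables (R : comPzSemiRingType) (w : nat -> R) (n : nat).

Definition rank_from (D : {set 'I_n}) (j : 'I_n) : nat :=
  #|[set i in D | (val j <= val i)%N]|.

Definition starred_sum (D : {set 'I_n}) (m : nat) : R :=
  \sum_(S : {set 'I_n} | (S \subset D) && (#|S| == m))
     \prod_(j in S) w (rank_from D j).

Fixpoint esym (d m : nat) : R :=
  match d, m with
  | _, 0 => 1
  | 0, _.+1 => 0
  | d.+1, m.+1 => esym d m.+1 + w d.+1 * esym d m
  end.

Lemma esym_gt d m : (d < m)%N -> esym d m = 0.
Proof. by elim: d m => [|d IH] [|m] //= lt_dm; rewrite !IH ?mulr0 ?addr0 // ltnW. Qed.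

Section MinimalElement.
Variables (D : {set 'I_n}) (j0 : 'I_n).
Hypotheses (j0D : j0 \in D) (j0_min : forall i, i \in D -> (val j0 <= val i)%N).

Lemma rank_from_min : rank_from D j0 = #|D|.
Proof. by apply: eq_card => i; rewrite !inE andb_idr //; apply: j0_min. Qed.

Lemma rank_from_setD1_min j : j \in D :\ j0 -> rank_from (D :\ j0) j = rank_from D j.
Proof.
rewrite in_setD1 => /andP[jj0 jD].
have lt_j0j : (val j0 < val j)%N by rewrite ltn_neqAle val_eqE eq_sym jj0 j0_min.
apply: eq_card => i; rewrite !inE; case: (eqVneq i j0) => [->|//].
by rewrite j0D leqNgt lt_j0j.
Qed.

End MinimalElement.

Lemma starred_sum0 D : starred_sum D 0 = 1.
Proof.
rewrite /starred_sum (big_pred1 set0) ?big_set0 // => S.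
by rewrite cards_eq0 andb_idl // => /eqP->; rewrite sub0set.
Qed.

Lemma starred_sum_esym D m : starred_sum D m = esym #|D| m.
Proof.
move cardD: #|D| => d; elim: d D m cardD => [|d IH] D [|m] cardD;
  rewrite ?starred_sum0 //.
  rewrite /starred_sum big_pred0 // => S; apply/negbTE/negP.
  by move=> /andP[/subset_leq_card + /eqP cardS]; rewrite cardS cardD.
have [j0 j0D j0_min] : exists2 j0, j0 \in D & forall i, i \in D -> (val j0 <= val i)%N.
  have [i iD] : exists i, i \in D by apply/set0Pn; rewrite -card_gt0 cardD.
  by case: (arg_minnP val iD) => j0; exists j0.
have cardDj0 : #|D :\ j0| = d by move: cardD; rewrite (cardsD1 j0) j0D => -[].
rewrite /starred_sum (sum_subsets_cardS _ _ j0D) /= -!(IH _ _ cardDj0) mulr_sumr.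
congr (_ + _); apply: eq_bigr => S /andP[SDj0 _].
  by apply: eq_bigr => j jS; rewrite rank_from_setD1_min // (subsetP SDj0).
rewrite big_setU1 /= ?rank_from_min ?cardD //; last first.
  by apply: contraTN SDj0 => j0S; rewrite subset_setD1 j0S andbF.
congr (_ * _); apply: eq_bigr => j jS.
by rewrite rank_from_setD1_min // (subsetP SDj0).
Qed.

End StarredSums.

Section QBinomial.
Variables (F : fieldType) (x : F).

Lemma qintD a b : qint x (a + b) = qint x a + x ^+ a * qint x b.
Proof.
rewrite /qint -!(big_mkord xpredT) (big_cat_nat _ (leq_addr b a)) //=.
rewrite -{2}(add0n a) big_addn addKn mulr_sumr; congr (_ + _).
by apply: eq_bigr => i _; rewrite -exprD addnC.
Qed.

Lemma qfactS k : qfact x k.+1 = qfact x k * qint x k.+1.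
Proof. by rewrite /qfact big_ord_recr. Qed.

Variable b : nat -> nat -> F.
Hypotheses (b_d0 : forall d, b d 0 = 1) (b_gt : forall d m, (d < m)%N -> b d m = 0).
Hypothesis b_Pascal : forall d m, b d.+1 m.+1 = b d m + x ^+ m.+1 * b d m.+1.

Lemma qPascal_qfact d m : (m <= d)%N -> qfact x m * qfact x (d - m) * b d m = qfact x d.
Proof.
elim: d m => [|d IH] [|m] // le_md.
- by rewrite b_d0 /qfact big_ord0 !mulr1.
- by rewrite b_d0 subn0 /qfact big_ord0 mul1r mulr1.
have term1 : qfact x m.+1 * qfact x (d - m) * b d m = qint x m.+1 * qfact x d.
  by rewrite -(IH m le_md) qfactS; ring.
have term2 : qfact x m.+1 * qfact x (d - m) * (x ^+ m.+1 * b d m.+1)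
    = x ^+ m.+1 * qint x (d - m) * qfact x d.
  have [lt_md|le_dm] := ltnP m d.
    by rewrite -(IH m.+1 lt_md) -(subnSK lt_md) (qfactS (d - m.+1)); ring.
  have -> : d = m by apply/anti_leq; rewrite le_dm -ltnS.
  by rewrite b_gt // subnn /qint big_ord0 !(mulr0, mul0r).
rewrite subSS b_Pascal mulrDr term1 term2 qfactS.
by rewrite -[in qint x d.+1](subnKC le_md) subSS qintD; ring.
Qed.

Lemma qPascal_qbinom d m : (forall i, qfact x i != 0) -> (m <= d)%N ->
  b d m = qbinom x d (d - m).
Proof.
move=> qfact_neq0 le_md; rewrite /qbinom subKn // -(qPascal_qfact le_md).
by rewrite [_ * b d m]mulrC [qfact x (d - m) * _]mulrC mulfK ?mulf_neq0.
Qed.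

End QBinomial.

Lemma desB_le n (p : sperm n) : (desB p <= n)%N.
Proof. by rewrite /desB (leq_trans (max_card _)) ?card_ord. Qed.

Section QWeights.
Variables (F : fieldType) (q : F).
Hypothesis q_neq0 : q != 0.
Hypothesis qfact_neq0 : forall i, qfact (q ^+ 2) i != 0.

Definition qweight (r : nat) : F := q ^ (- (2 * r%:Z - 1)).

Lemma esym_qweight d m : (m <= d)%N ->
  esym qweight d m = q ^ (- (m%:Z * (2 * d%:Z - m%:Z))) * qbinom (q ^+ 2) d (d - m).
Proof.
move=> le_md.
pose b d m := q ^ (m%:Z * (2 * d%:Z - m%:Z)) * esym qweight d m.
rewrite -(qPascal_qbinom (b := b)) // /b.
- by rewrite mulrA -expfzDr // addNr expr0z mul1r.
- by move=> i; rewrite mul0r expr0z mul1r; case: i.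
- by move=> i j lt_ij; rewrite esym_gt ?mulr0.
- move=> i j; rewrite /= mulrDr addrC; congr (_ + _).
    by rewrite mulrA /qweight -expfzDr //; congr (q ^ _ * _); lia.
  by rewrite mulrA -exprM exprnP -expfzDr //; congr (q ^ _ * _); lia.
Qed.

Lemma expfz_fmajS n (p : sperm n) S :
  q ^ fmajS p S = q ^+ fmaj p * \prod_(j in S) qweight (rank_from (DesB p) j).
Proof.
rewrite /fmajS expfzDr // -sumrN exprnP.
by rewrite (big_morph _ (fun a b => expfzDr a b q_neq0) (expr0z q)).
Qed.

Lemma Bfmaj_esym n m : Bfmaj q n m = \sum_(0 <= d < n.+1) esym qweight d m * Bnk q n d.
Proof.
have starred_fmajS p :
    \sum_(S : {set 'I_n} | (S \subset DesB p) && (#|S| == m)) q ^ fmajS p S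
      = q ^+ fmaj p * esym qweight (desB p) m.
  rewrite -starred_sum_esym mulr_sumr; apply: eq_bigr => S _; exact: expfz_fmajS.
rewrite /Bfmaj; under eq_bigr do rewrite starred_fmajS.
rewrite (partition_big (fun p : sperm n => inord (desB p) : 'I_n.+1) xpredT) //=.
rewrite big_mkord; apply: eq_bigr => d _.
have desB_eq (p : sperm n) : (inord (desB p) == d :> 'I_n.+1) = (desB p == d).
  by rewrite -(inj_eq val_inj) /= inordK // ltnS desB_le.
rewrite /Bnk mulr_sumr; apply: eq_big => [p|p]; first by rewrite desB_eq.
by rewrite desB_eq => /eqP->; rewrite mulrC.
Qed.

Lemma Bfmaj_qbinom n k : (k <= n)%N ->
  Bfmaj q n (n - k) =
  \sum_(0 <= l < k.+1)
     q ^ ((n - k)%:Z * (2 * l%:Z - n%:Z - k%:Z)) * Bnk q n (n - l)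
       * qbinom (q ^+ 2) (n - l) (k - l).
Proof.
move=> le_kn; rewrite Bfmaj_esym (big_cat_nat _ (n := n - k)) ?leqW ?leq_subr //=.
rewrite big_nat_cond big1 ?add0r => [|d /andP[/andP[_ lt_d] _]]; last first.
  by rewrite esym_gt ?mul0r.
rewrite -{1}(add0n (n - k)%N) big_addn subSn ?leq_subr // subKn // big_nat_rev.
apply: eq_big_nat => l /andP[_ lt_lk].
have -> : (0 + k.+1 - l.+1 + (n - k) = n - l)%N by lia.
rewrite esym_qweight; last by lia.
have -> : (n - l - (n - k) = k - l)%N by lia.
by rewrite mulrAC; congr (q ^ _ * _ * _); lia.
Qed.

End QWeights.

Lemma qX_neq0 : qX != 0.
Proof. by rewrite tofrac_eq0 polyX_eq0. Qed.

Lemma qfact_qX2_neq0 i : qfact (qX ^+ 2) i != 0.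
Proof.
apply/prodf_neq0 => j _; rewrite /qint /qX -tofracXn.
under eq_bigr do rewrite -tofracXn.
rewrite -raddf_sum tofrac_eq0; apply/eqP => /(congr1 (horner^~ 1)).
rewrite horner_sum horner0; under eq_bigr do rewrite -exprM hornerXn expr1n.
by rewrite sumr_const card_ord => /eqP; rewrite pnatr_eq0.
Qed.

Unset Implicit Arguments. Set Strict Implicit.

Theorem proposition2p4 (n k : nat) : (k <= n)%N ->
  Bfmaj qX n (n - k) =
  \sum_(0 <= l < k.+1)
     qX ^ ((n - k)%:Z * (2 * l%:Z - n%:Z - k%:Z)) * Bnk qX n (n - l)
       * qbinom (qX ^+ 2) (n - l) (k - l).
Proof. exact: Bfmaj_qbinom qX_neq0 qfact_qX2_neq0 n k. Qed.
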